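(* Let $S$ be a solid and let $x,y\in S$. Then $xy=e(xy)$ if and only if $x=e(x)$ or $y=e(y)$.
   Context: A solid is a set $S$ with two binary operations $+$ and $\cdot$ (written $xy$) and a binary relation $\le$ satisfying the following axioms (all variables range over $S$). (A1) $+$ is associative and commutative. (A2) For each $x$ there is $e$ with $x+e=x$ such that $e+f=e$ for every $f$ with $x+f=x$; this $e$ is unique and is denoted $e(x)$ (the magnitude of $x$). An element $x$ with $x=e(x)$ is called a magnitude. (A3) For each $x$ there is $s$ with $x+s=e(x)$ and $e(s)=e(x)$; it is unique and denoted $-x$; write $x-y$ for $x+(-y)$. (A4) $e(x+y)=e(x)$ or $e(x+y)=e(y)$. (M1) $\cdot$ is associative and commutative. (M2) For each $x\neq e(x)$ there is $u$ with $xu=x$ such that $uv=u$ for every $v$ with $xv=x$; it is unique and denoted $u(x)$. (M3) For each $x\ne e(x)$ there is $d$ with $xd=u(x)$ and $u(d)=u(x)$; it is unique and denoted $x^{-1}$; write $y/x$ for $yx^{-1}$. (M4) If $x\neq e(x)$ and $y\ne e(y)$ then $u(xy)=u(x)$ or $u(xy)=u(y)$. (O1) $\le$ is a total order (reflexive, antisymmetric, transitive, total); $x<y$ means $x\le y$ and $x\ne y$. (O2) $x\le y\Rightarrow x+z\le y+z$. (O3) $y+e(x)=e(x)\Rightarrow (y\le e(x)$ and $-y\le e(x))$. (O4) $(e(x)<x$ and $y\le z)\Rightarrow xy\le xz$. (O5) $e(y)\le y\le z\Rightarrow e(x)y\le e(x)z$. (AM1) For all $x,y$ there is $z$ with $e(x)y=e(z)$.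 (AM2) $e(xy)=e(x)y+e(y)x$. (AM3) If $x\ne e(x)$ then $e(u(x))=e(x)/x$. (AM4) (distributivity axiom) $xy+xz=x(y+z)+e(x)y+e(x)z$. (AM5) $-(xy)=(-x)y$. (E1) There is $m$ with $m+x=x$ for all $x$; it is unique, called zero and denoted $0$. (E2) There is $u$ with $ux=x$ for all $x$; it is unique, called one and denoted $1$. (E3) There is $M$ with $e(x)+M=M$ for all $x$. (E4) There is $x$ with $e(x)\ne 0$ and $e(x)\ne M$. (E5) For every $x$ there is $a$ with $x=a+e(x)$ and $e(a)=0$. (E6) If $x,y$ are magnitudes with $x<y$, there is $z$ with $z\ne e(z)$ and $x<z<y$. Further notation: $S^*=\{x\in S: x\ne e(x)\}$ (zeroless elements). $x$ is positive if $e(x)\le x$ and negative if $x<e(x)$; $|x|=x$ if $x$ is positive and $|x|=-x$ if $x$ is negative. $x$ is precise if $e(x)=0$. The relative uncertainty $R(x)$ is $e(u(x))$ if $x\ne e(x)$, and $M$ (from (E3)) if $x=e(x)$. *)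

(* The functions e, neg, u, inv are
   included as fields together with their defining (specification +
   uniqueness) axioms, exactly as (A2),(A3),(M2),(M3) stipulate. *)

Record Solid := {
  car :> Type;
  add : car -> car -> car;
  mul : car -> car -> car;
  le  : car -> car -> Prop;
  e   : car -> car;     (* magnitude, (A2) *)
  neg : car -> car;
  u   : car -> car;     (* u(x), (M2); meaningful for x <> e x *)
  inv : car -> car;     (* x^{-1}, (M3); meaningful for x <> e x *)
  Mbig : car;

  add_assoc : forall x y z, add x (add y z) = add (add x y) z;
  add_comm  : forall x y, add x y = add y x;
  e_spec1 : forall x, add x (e x) = x;
  e_spec2 : forall x f, add x f = x -> add (e x) f = e x;
  e_uniq  : forall x ee, add x ee = x -> (forall f, add x f = x -> add ee f = ee) -> ee = e x;
  neg_spec1 : forall x, add x (neg x) = e x;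
  neg_spec2 : forall x, e (neg x) = e x;
  neg_uniq  : forall x s, add x s = e x -> e s = e x -> s = neg x;
  e_add : forall x y, e (add x y) = e x \/ e (add x y) = e y;
  mul_assoc : forall x y z, mul x (mul y z) = mul (mul x y) z;
  mul_comm  : forall x y, mul x y = mul y x;
  u_spec1 : forall x, x <> e x -> mul x (u x) = x;
  u_spec2 : forall x v, x <> e x -> mul x v = x -> mul (u x) v = u x;
  u_uniq  : forall x w, x <> e x -> mul x w = x ->
              (forall v, mul x v = x -> mul w v = w) -> w = u x;
  inv_spec1 : forall x, x <> e x -> mul x (inv x) = u x;
  inv_spec2 : forall x, x <> e x -> u (inv x) = u x;
  inv_uniq  : forall x d, x <> e x -> mul x d = u x -> u d = u x -> d = inv x;
  u_mul : forall x y, x <> e x -> y <> e y ->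
            u (mul x y) = u x \/ u (mul x y) = u y;
  le_refl  : forall x, le x x;
  le_antisym : forall x y, le x y -> le y x -> x = y;
  le_trans : forall x y z, le x y -> le y z -> le x z;
  le_total : forall x y, le x y \/ le y x;
  le_add : forall x y z, le x y -> le (add x z) (add y z);
  O3 : forall x y, add y (e x) = e x -> le y (e x) /\ le (neg y) (e x);
  O4 : forall x y z, (le (e x) x /\ e x <> x) -> le y z -> le (mul x y) (mul x z);
  O5 : forall x y z, le (e y) y -> le y z -> le (mul (e x) y) (mul (e x) z);
  AM1 : forall x y, exists z, mul (e x) y = e z;
  AM2 : forall x y, e (mul x y) = add (mul (e x) y) (mul (e y) x);
  AM3 : forall x, x <> e x -> e (u x) = mul (e x) (inv x);
  AM4 : forall x y z, add (mul x y) (mul x z)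
          = add (add (mul x (add y z)) (mul (e x) y)) (mul (e x) z);
  AM5 : forall x y, neg (mul x y) = mul (neg x) y;
  E1 : exists m, forall x, add m x = x;
  E2 : exists one, forall x, mul one x = x;
  E3 : forall x, add (e x) Mbig = Mbig;
  (* (E4) -- 0 is the neutral element from (E1), M the element from (E3) *)
  E4 : forall m, (forall x, add m x = x) ->
         exists x, e x <> m /\ e x <> Mbig;
  E5 : forall x, exists a, x = add a (e x) /\
         (forall m, (forall y, add m y = y) -> e a = m);
  E6 : forall x y, x = e x -> y = e y -> (le x y /\ x <> y) ->
         exists z, z <> e z /\ (le x z /\ x <> z) /\ (le z y /\ z <> y)
}.

(* If x and y are zeroless, u(x) u(y) = (xy)(x^-1 y^-1), so a magnitude xy
   would make the product of the two zeroless idempotents u(x), u(y) a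
   magnitude.  Zeroless idempotents p are positive, so for p <= q the product
   pq lies above p; multiplying the comparison of -p and -q by p or by q and
   using -(pq) = pq then squeezes p or q between its magnitude and its
   negative, forcing it to be a magnitude. *)

From Pilot Require Import Defs.
From Stdlib Require Import Classical.

Section SolidArithmetic.

Variable S : Solid.

Declare Scope solid_scope.
Local Open Scope solid_scope.
Local Notation "x + y" := (add S x y) : solid_scope.
Local Notation "x * y" := (mul S x y) : solid_scope.
Local Notation "- x" := (neg S x) : solid_scope.
Local Notation "x <= y" := (le S x y) : solid_scope.
Local Notation e := (Defs.e S).
Local Notation u := (Defs.u S).
Local Notation inv := (Defs.inv S).

Implicit Types x y m p q r : S.

Lemma e_idem x : e (e x) = e x.
Proof.
  symmetry; apply e_uniq.
  - apply e_spec2, e_spec1.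
  - tauto.
Qed.

Lemma mag_mull m x : e m = m -> e (m * x) = m * x.
Proof.
  intros Hm; destruct (AM1 S m x) as [z Hz].
  rewrite Hm in Hz; rewrite Hz; apply e_idem.
Qed.

Lemma mag_mulr m x : e m = m -> e (x * m) = x * m.
Proof. rewrite mul_comm; apply mag_mull. Qed.

Lemma mag_addK m : e m = m -> m + m = m.
Proof. intros Hm; rewrite <- Hm at 2; apply e_spec1. Qed.

Lemma neg_mag m : e m = m -> - m = m.
Proof. intros Hm; symmetry; apply neg_uniq; rewrite ?mag_addK; auto. Qed.

Lemma negK x : - - x = x.
Proof.
  symmetry; apply neg_uniq.
  - rewrite add_comm, neg_spec1; symmetry; apply neg_spec2.
  - symmetry; apply neg_spec2.
Qed.

Lemma mul_negr x y : x * - y = - (x * y).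
Proof. rewrite mul_comm, <- AM5, mul_comm; reflexivity. Qed.

Lemma neg_zeroless x : x <> e x -> - x <> e (- x).
Proof.
  intros Hx Hn; apply Hx.
  rewrite neg_spec2 in Hn.
  rewrite <- (negK x), Hn, neg_mag by apply e_idem.
  symmetry; apply e_idem.
Qed.

Lemma u_zeroless x : x <> e x -> u x <> e (u x).
Proof.
  intros Hx Hu; apply Hx.
  pose proof (mag_mull (u x) x (eq_sym Hu)) as H.
  rewrite mul_comm, u_spec1 in H by exact Hx.
  symmetry; exact H.
Qed.

Lemma u_idem x : x <> e x -> u x * u x = u x.
Proof. intros Hx; apply u_spec2, u_spec1; exact Hx. Qed.

Lemma mul_u_u x y : x <> e x -> y <> e y -> u x * u y = (x * y) * (inv x * inv y).
Proof.
  intros Hx Hy; rewrite <- (inv_spec1 S x Hx), <- (inv_spec1 S y Hy).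
  rewrite !mul_assoc; f_equal.
  rewrite <- !mul_assoc; f_equal; apply mul_comm.
Qed.

Lemma idem_mul_e p : p * p = p -> e p * p = e p.
Proof.
  intros Hp; pose proof (AM2 S p p) as H.
  rewrite Hp, mag_addK in H by (apply mag_mull, e_idem).
  symmetry; exact H.
Qed.

(* If p <= e p then -p is positive, and O4 for -p gives e p = (-p) e p <= (-p)(-p) = p. *)
Lemma idem_pos p : p * p = p -> p <> e p -> e p <= p.
Proof.
  intros Hp Hz; destruct (le_total S (e p) p) as [H | H]; [exact H |].
  assert (Hle : e p <= - p).
  { pose proof (le_add S _ _ (- p) H) as H1.
    rewrite neg_spec1, add_comm, <- (neg_spec2 S p), e_spec1 in H1.
    rewrite neg_spec2 in H1; exact H1. }
  assert (Hneg : e (- p) <= - p) by (rewrite neg_spec2; exact Hle).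
  assert (Hnz : e (- p) <> - p) by (intro C; exact (neg_zeroless p Hz (eq_sym C))).
  pose proof (O4 S (- p) (e p) (- p) (conj Hneg Hnz) Hle) as H2.
  rewrite <- !AM5, mul_comm, idem_mul_e, mul_negr, Hp, negK, neg_mag in H2
    by (exact Hp || apply e_idem).
  exact H2.
Qed.

Lemma zero_le_e z x : (forall y, z + y = y) -> z <= e x.
Proof. intros Hz; apply (O3 S x z), Hz. Qed.

Lemma le_e_of_le_neg p r : e p <= p -> p <= - r -> r <= e r.
Proof.
  intros Hp H; destruct (E1 S) as [z Hz].
  pose proof (le_add S _ _ r H) as H1.
  rewrite (add_comm S (- r) r), neg_spec1 in H1.
  pose proof (le_add S _ _ r Hp) as H2.
  pose proof (le_add S _ _ r (zero_le_e z p Hz)) as H3; rewrite Hz in H3.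
  eapply le_trans; [exact H3 |]; eapply le_trans; [exact H2 | exact H1].
Qed.

Lemma mul_idem_not_mag p q :
  p * p = p -> q * q = q -> p <> e p -> q <> e q -> p <= q ->
  e (p * q) <> p * q.
Proof.
  intros Pp Pq Zp Zq Hpq HM.
  pose proof (idem_pos p Pp Zp) as Ep; pose proof (idem_pos q Pq Zq) as Eq.
  assert (O4p : forall y z, y <= z -> p * y <= p * z) by (intros; apply O4; auto).
  assert (O4q : forall y z, y <= z -> q * y <= q * z) by (intros; apply O4; auto).
  assert (Hp_pq : p <= p * q) by (rewrite <- Pp at 1; apply O4p, Hpq).
  destruct (le_total S (- q) (- p)) as [H | H].
  - apply O4p in H; rewrite !mul_negr, Pp, neg_mag in H by exact HM.
    apply Zp, le_antisym; [| exact Ep].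
    apply (le_e_of_le_neg p p Ep); eapply le_trans; eauto.
  - apply O4q in H; rewrite !mul_negr, Pq, mul_comm, neg_mag in H by exact HM.
    apply Zq, le_antisym; [| exact Eq].
    apply (le_e_of_le_neg p q Ep); eapply le_trans; eauto.
Qed.

Lemma mul_zeroless x y : x <> e x -> y <> e y -> x * y <> e (x * y).
Proof.
  intros Hx Hy H.
  assert (HM : e (u x * u y) = u x * u y).
  { rewrite mul_u_u by assumption; apply mag_mull; symmetry; exact H. }
  pose proof (u_idem x Hx) as Ix; pose proof (u_idem y Hy) as Iy.
  pose proof (u_zeroless x Hx) as Zx; pose proof (u_zeroless y Hy) as Zy.
  destruct (le_total S (u x) (u y)) as [L | L].
  - exact (mul_idem_not_mag _ _ Ix Iy Zx Zy L HM).
  - rewrite mul_comm in HM; exact (mul_idem_not_mag _ _ Iy Ix Zy Zx L HM).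
Qed.

End SolidArithmetic.

Theorem mainTheorem12 (S : Solid) (x y : S) :
  mul S x y = e S (mul S x y) <-> (x = e S x \/ y = e S y).
Proof.
  split.
  - intros H.
    destruct (classic (x = e S x)) as [Hx | Hx]; [left; exact Hx |].
    destruct (classic (y = e S y)) as [Hy | Hy]; [right; exact Hy |].
    exfalso; exact (mul_zeroless S x y Hx Hy H).
  - intros [H | H]; symmetry.
    + apply mag_mull; symmetry; exact H.
    + apply mag_mulr; symmetry; exact H.
Qed.
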